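(* Let $0=t_0<\dots<t_N=T$, $\tau_k=t_k-t_{k-1}$, $r_k=\tau_k/\tau_{k-1}$ ($2\le k\le N$), with all $r_k>0$. Let $u(x,t)$ satisfy $\|\partial_t^ku(\cdot,t)\|\le\bar Ct^{\alpha-k}$ for $t\in(0,T]$, $k=1,2,3$, with $\bar C>0$ and $\frac12\le\alpha\le1$. Define the truncation error $\eta^n:=\mathcal D_2u(\cdot,t_n)-\partial_tu(\cdot,t_n)$, where $\mathcal D_2v^n=\sum_{k=1}^nb^{(n)}_{n-k}(v^k-v^{k-1})$ (so $\mathcal D_2v^1=(v^1-v^0)/\tau_1$ and, for $n\ge2$, $\mathcal D_2v^n=\frac{1+2r_n}{\tau_n(1+r_n)}(v^n-v^{n-1})-\frac{r_n^2}{\tau_n(1+r_n)}(v^{n-1}-v^{n-2})$). Then $$\|\eta^j\|\le2\bar C\tau_j^2t_{j-1}^{\alpha-3}+\tfrac12\bar C\tau_{j-1}^2t_{j-2}^{\alpha-3},\ j\ge3;\qquad \|\eta^2\|\le\big(2r_2^2+1/(2\alpha)\big)\bar C\tau_1^{\alpha-1};\qquad \|\eta^1\|\le\frac{\bar C}{\alpha}\tau_1^{\alpha-1}.$$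
   Context: BDF2 kernels: $b^{(1)}_0=1/\tau_1$; for $n\ge2$, $b^{(n)}_0=\frac{1+2r_n}{\tau_n(1+r_n)}$, $b^{(n)}_1=-\frac{r_n^2}{\tau_n(1+r_n)}$, $b^{(n)}_j=0$ for $j\ge2$. In the paper $\|\cdot\|$ is the discrete $L^2$ norm over interior spatial grid points, $\|v\|=(\sum_{i=1}^{M-1}hv_i^2)^{1/2}$. *)

From Stdlib Require Import Reals.
From Coquelicot Require Import Coquelicot.
Open Scope R_scope.

Definition dnorm (M : nat) (h : R) (v : nat -> R) : R :=
  sqrt (sum_n_m (fun i => h * (v i) ^ 2) 1 (M - 1)%nat).

Definition tau (t : nat -> R) (k : nat) : R := t k - t (k - 1)%nat.
Definition ratio (t : nat -> R) (k : nat) : R := tau t k / tau t (k - 1)%nat.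

Definition bdf2_kernel (t : nat -> R) (n j : nat) : R :=
  match n with
  | O => 0
  | S O => match j with O => 1 / tau t 1 | _ => 0 end
  | _ => match j with
         | O => (1 + 2 * ratio t n) / (tau t n * (1 + ratio t n))
         | S O => - (ratio t n ^ 2) / (tau t n * (1 + ratio t n))
         | _ => 0
         end
  end.

Definition D2 (t : nat -> R) (v : nat -> R) (n : nat) : R :=
  sum_n_m (fun k => bdf2_kernel t n (n - k)%nat * (v k - v (k - 1)%nat)) 1 n.

(* ud k i s = k-th time derivative of the i-th grid component of u at time s;
   truncation error eta^n = D_2 u(.,t_n) - d_t u(.,t_n) (componentwise) *)
Definition eta (t : nat -> R) (ud : nat -> nat -> R -> R) (n : nat) : nat -> R :=
  fun i => D2 t (fun k => ud O i (t k)) n - ud 1%nat i (t n).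

From Stdlib Require Import Reals Lra Lia Factorial.
From Coquelicot Require Import Coquelicot.
Open Scope R_scope.

(* Testing the truncation error e := eta^n against itself, ||e||^2 = <e, D_2 u(t_n) - u'(t_n)>
   is the BDF2 truncation error of the scalar function phi(s) := <e, u(s)>, whose derivatives
   obey |phi^(k)(s)| <= ||e|| C s^(alpha-k) by Cauchy-Schwarz; dividing by ||e|| reduces
   everything to scalar functions.
   For n >= 3 the three nodes stay away from 0.  BDF2 differentiates quadratics exactly, so
   expanding at t_(n-1) leaves only third-order Taylor remainders, bounded through
   |phi'''| <= C t_(n-1)^(alpha-3) on [t_(n-1), t_n] and C t_(n-2)^(alpha-3) on [t_(n-2), t_(n-1)].
   For n <= 2 the node t_0 = 0 is singular.  The degree-m Taylor polynomial of phi taken at s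
   and evaluated at 0 differs from phi(0) by a function of s whose derivative is
   (-s)^m/m! phi^(m+1)(s) = O(s^(alpha-1)); this is integrable at 0 because alpha > 0, which
   gives the bounds of order tau_1^(alpha-1). *)

Lemma is_derive_Rplus (f g : R -> R) x df dg :
  is_derive f x df -> is_derive g x dg -> is_derive (fun y => f y + g y) x (df + dg).
Proof. apply (is_derive_plus f g). Qed.

Lemma is_derive_Rminus (f g : R -> R) x df dg :
  is_derive f x df -> is_derive g x dg -> is_derive (fun y => f y - g y) x (df - dg).
Proof. apply (is_derive_minus f g). Qed.

Lemma is_derive_Rmult (f g : R -> R) x df dg :
  is_derive f x df -> is_derive g x dg ->
  is_derive (fun y => f y * g y) x (df * g x + f x * dg).
Proof.
  intros Hf Hg. apply (is_derive_mult f g); [exact Hf | exact Hg | intros; apply Rmult_comm].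
Qed.

Lemma is_derive_Rpower s e : 0 < s -> is_derive (fun x => Rpower x e) s (e * Rpower s (e - 1)).
Proof. intros Hs. apply is_derive_Reals, derivable_pt_lim_power, Hs. Qed.

Lemma filterlim_Rplus {T} {F : (T -> Prop) -> Prop} {FF : Filter F} (f g : T -> R) a b :
  filterlim f F (locally a) -> filterlim g F (locally b) ->
  filterlim (fun x => f x + g x) F (locally (a + b)).
Proof. intros Hf Hg. exact (filterlim_comp_2 f g Rplus Hf Hg (filterlim_plus a b)). Qed.

Lemma filterlim_Rmult_l {T} {F : (T -> Prop) -> Prop} (f : T -> R) c a :
  filterlim f F (locally a) -> filterlim (fun x => c * f x) F (locally (c * a)).
Proof.
  intros Hf. exact (filterlim_comp _ _ _ f (fun y => c * y) F _ _ Hf (filterlim_scal_r c a)).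
Qed.

Lemma sum_n_m_ext_R (u v : nat -> R) (n m : nat) :
  (forall k, u k = v k) -> sum_n_m u n m = sum_n_m v n m.
Proof. apply sum_n_m_ext. Qed.

Lemma sum_n_m_Rplus (u v : nat -> R) (n m : nat) :
  sum_n_m (fun k => u k + v k) n m = sum_n_m u n m + sum_n_m v n m.
Proof. exact (sum_n_m_plus u v n m). Qed.

Lemma sum_n_m_Rmult_l (c : R) (u : nat -> R) (n m : nat) :
  sum_n_m (fun k => c * u k) n m = c * sum_n_m u n m.
Proof. exact (sum_n_m_mult_l c u n m). Qed.

Lemma sum_n_m_nonneg (u : nat -> R) (n m : nat) : (forall k, 0 <= u k) -> 0 <= sum_n_m u n m.
Proof.
  intros Hu. apply Rle_trans with (sum_n_m (fun _ => 0) n m).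
  - right. symmetry. exact (sum_n_m_const_zero (G := R_AbelianMonoid) n m).
  - apply sum_n_m_le. exact Hu.
Qed.

Lemma is_derive_sum_n_m (g : nat -> R -> R) (dg : nat -> R) (n m : nat) (x : R) :
  (forall k, (n <= k <= m)%nat -> is_derive (g k) x (dg k)) ->
  is_derive (fun y => sum_n_m (fun k => g k y) n m) x (sum_n_m dg n m).
Proof.
  induction m as [|m IH]; intros Hg.
  - destruct n as [|n].
    + apply (is_derive_ext (g 0%nat)); [intros y; rewrite sum_n_n; reflexivity |].
      rewrite sum_n_n. apply Hg. lia.
    + apply (is_derive_ext (fun _ => 0)); [intros y; rewrite sum_n_m_zero by lia; reflexivity |].
      rewrite sum_n_m_zero by lia.
      exact (is_derive_const (K := R_AbsRing) (V := R_NormedModule) _ x).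
  - destruct (Compare_dec.le_lt_dec n (S m)) as [Hn | Hn].
    + apply (is_derive_ext (fun y => sum_n_m (fun k => g k y) n m + g (S m) y));
        [intros y; rewrite sum_n_Sm by exact Hn; reflexivity |].
      rewrite sum_n_Sm by exact Hn.
      apply is_derive_Rplus; [apply IH | apply Hg]; intros; try apply Hg; lia.
    + apply (is_derive_ext (fun _ => 0)); [intros y; rewrite sum_n_m_zero by lia; reflexivity |].
      rewrite sum_n_m_zero by lia.
      exact (is_derive_const (K := R_AbsRing) (V := R_NormedModule) _ x).
Qed.

Lemma filterlim_sum_n_m {T} {F : (T -> Prop) -> Prop} {FF : Filter F}
  (g : nat -> T -> R) (l : nat -> R) (n m : nat) :
  (forall k, (n <= k <= m)%nat -> filterlim (g k) F (locally (l k))) ->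
  filterlim (fun x => sum_n_m (fun k => g k x) n m) F (locally (sum_n_m l n m)).
Proof.
  induction m as [|m IH]; intros Hg.
  - destruct n as [|n].
    + apply (filterlim_ext (g 0%nat)); [intros x; rewrite sum_n_n; reflexivity |].
      rewrite sum_n_n. apply Hg. lia.
    + apply (filterlim_ext (fun _ => 0)); [intros x; rewrite sum_n_m_zero by lia; reflexivity |].
      rewrite sum_n_m_zero by lia. apply filterlim_const.
  - destruct (Compare_dec.le_lt_dec n (S m)) as [Hn | Hn].
    + apply (filterlim_ext (fun x => sum_n_m (fun k => g k x) n m + g (S m) x));
        [intros x; rewrite sum_n_Sm by exact Hn; reflexivity |].
      rewrite sum_n_Sm by exact Hn.
      apply filterlim_Rplus; [apply IH | apply Hg]; intros; try apply Hg; lia.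
    + apply (filterlim_ext (fun _ => 0)); [intros x; rewrite sum_n_m_zero by lia; reflexivity |].
      rewrite sum_n_m_zero by lia. apply filterlim_const.
Qed.

Lemma Rpower_pos (x e : R) : 0 < Rpower x e.
Proof. apply exp_pos. Qed.

Lemma Rpower_pow_mul (x e : R) (n : nat) : 0 < x -> x ^ n * Rpower x e = Rpower x (e + INR n).
Proof. intros Hx. rewrite Rpower_plus, Rpower_pow by exact Hx. ring. Qed.

Lemma Rpower_sub_1 (x e : R) : 0 < x -> Rpower x e = x * Rpower x (e - 1).
Proof. intros Hx. rewrite <- (Rpower_1 x Hx) at 2. rewrite <- Rpower_plus. f_equal. ring. Qed.

Lemma Rpower_antitone_nonpos (x y e : R) : 0 < x <= y -> e <= 0 -> Rpower y e <= Rpower x e.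
Proof.
  intros Hxy He. unfold Rpower.
  assert (ln x <= ln y) by (apply ln_le; lra).
  destruct (Req_dec (e * ln y) (e * ln x)) as [E | E]; [rewrite E; lra |].
  left. apply exp_increasing. nra.
Qed.

Lemma nondecreasing_of_derive_nonneg (G dG : R -> R) x y :
  x <= y ->
  (forall s, x <= s <= y -> is_derive G s (dG s)) ->
  (forall s, x <= s <= y -> 0 <= dG s) ->
  G x <= G y.
Proof.
  intros Hxy HG Hpos.
  destruct (MVT_gen G x y dG) as [c [Hc Heq]].
  - intros s Hs. rewrite Rmin_left, Rmax_right in Hs by lra. apply HG; lra.
  - intros s Hs. rewrite Rmin_left, Rmax_right in Hs by lra.
    apply continuity_pt_filterlim, (ex_derive_continuous (K := R_AbsRing) (V := R_NormedModule)).
    exists (dG s). apply HG; lra.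
  - rewrite Rmin_left, Rmax_right in Hc by lra.
    assert (0 <= dG c * (y - x)) by (apply Rmult_le_pos; [apply Hpos |]; lra).
    lra.
Qed.

Lemma abs_sub_le_of_derive_dominated (g dg G dG : R -> R) x y :
  x <= y ->
  (forall s, x <= s <= y -> is_derive g s (dg s)) ->
  (forall s, x <= s <= y -> is_derive G s (dG s)) ->
  (forall s, x <= s <= y -> Rabs (dg s) <= dG s) ->
  Rabs (g y - g x) <= G y - G x.
Proof.
  intros Hxy Hg HG Hdom.
  assert (Hlow : G x - g x <= G y - g y).
  { apply (nondecreasing_of_derive_nonneg (fun s => G s - g s) (fun s => dG s - dg s)); [lra | |].
    - intros s Hs. apply is_derive_Rminus; auto.
    - intros s Hs. pose proof (proj1 (Rabs_le_between _ _) (Hdom s Hs)); lra. }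
  assert (Hup : G x + g x <= G y + g y).
  { apply (nondecreasing_of_derive_nonneg (fun s => G s + g s) (fun s => dG s + dg s)); [lra | |].
    - intros s Hs. apply is_derive_Rplus; auto.
    - intros s Hs. pose proof (proj1 (Rabs_le_between _ _) (Hdom s Hs)); lra. }
  apply Rabs_le. lra.
Qed.

(** * Taylor expansions *)

(* [f k] plays the role of the [k]-th derivative of [f 0]. *)
Definition taylor_poly (f : nat -> R -> R) (n : nat) (c x : R) : R :=
  sum_n (fun k => (x - c) ^ k / INR (fact k) * f k c) n.

Lemma taylor_poly_O f c x : taylor_poly f 0 c x = f 0%nat c.
Proof. unfold taylor_poly. rewrite sum_O. simpl. field. Qed.

Lemma taylor_poly_S f n c x :
  taylor_poly f (S n) c x = taylor_poly f n c x + (x - c) ^ S n / INR (fact (S n)) * f (S n) c.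
Proof. unfold taylor_poly. rewrite sum_Sn. reflexivity. Qed.

Lemma taylor_poly_1 f c x : taylor_poly f 1 c x = f 0%nat c + (x - c) * f 1%nat c.
Proof. rewrite taylor_poly_S, taylor_poly_O. simpl. field. Qed.

Lemma taylor_poly_2 f c x :
  taylor_poly f 2 c x = f 0%nat c + (x - c) * f 1%nat c + (x - c) ^ 2 / 2 * f 2%nat c.
Proof. rewrite taylor_poly_S, taylor_poly_1. simpl. field. Qed.

Lemma taylor_poly_center f n x : taylor_poly f n x x = f 0%nat x.
Proof.
  induction n as [|n IH]; [apply taylor_poly_O |].
  rewrite taylor_poly_S, IH, Rminus_diag, pow_i by lia. field. apply INR_fact_neq_0.
Qed.

Lemma INR_fact_S n : INR (fact (S n)) = INR (S n) * INR (fact n).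
Proof. change (fact (S n)) with (S n * fact n)%nat. apply mult_INR. Qed.

Lemma is_derive_pow_div_fact (a s : R) (n : nat) :
  is_derive (fun c => (c - a) ^ S n / INR (fact (S n))) s ((s - a) ^ n / INR (fact n)).
Proof.
  auto_derive; [exact I |].
  change (match n with 0%nat => 1 | S _ => INR n + 1 end) with (INR (S n)).
  change (fact n + n * fact n)%nat with (fact (S n)). rewrite INR_fact_S.
  unfold Rminus. field. split; [apply INR_fact_neq_0 | apply not_0_INR; lia].
Qed.

Lemma is_derive_pow_div_fact_rev (a s : R) (n : nat) :
  is_derive (fun c => (a - c) ^ S n / INR (fact (S n))) s (- ((a - s) ^ n / INR (fact n))).
Proof.
  auto_derive; [exact I |].
  change (match n with 0%nat => 1 | S _ => INR n + 1 end) with (INR (S n)).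
  change (fact n + n * fact n)%nat with (fact (S n)). rewrite INR_fact_S.
  unfold Rminus. field. split; [apply INR_fact_neq_0 | apply not_0_INR; lia].
Qed.

Lemma is_derive_taylor_poly_center (f : nat -> R -> R) (n : nat) (x s : R) :
  (forall k, (k <= n)%nat -> is_derive (f k) s (f (S k) s)) ->
  is_derive (fun c => taylor_poly f n c x) s ((x - s) ^ n / INR (fact n) * f (S n) s).
Proof.
  induction n as [|n IH]; intros Hd.
  - apply (is_derive_ext (f 0%nat)); [intros c; symmetry; apply taylor_poly_O |].
    assert (E : (x - s) ^ 0 / INR (fact 0) * f 1%nat s = f 1%nat s) by (simpl; field).
    rewrite E. apply Hd; lia.
  - eapply is_derive_ext; [intros c; symmetry; apply taylor_poly_S |].
    (* Half of the product rule on the new term cancels the derivative of the old ones. *)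
    set (next := (x - s) ^ S n / INR (fact (S n)) * f (S (S n)) s).
    assert (E : next = (x - s) ^ n / INR (fact n) * f (S n) s
                       + (- ((x - s) ^ n / INR (fact n)) * f (S n) s + next))
      by (unfold Rdiv; ring).
    rewrite E; unfold next.
    apply is_derive_Rplus; [apply IH; intros; apply Hd; lia |].
    apply (is_derive_Rmult (fun c => (x - c) ^ S n / INR (fact (S n))) (f (S n)));
      [apply is_derive_pow_div_fact_rev | apply Hd; lia].
Qed.

Lemma Rabs_pow_div_fact_mul_le (d y M : R) (n : nat) :
  Rabs y <= M -> Rabs (d ^ n / INR (fact n) * y) <= Rabs d ^ n / INR (fact n) * M.
Proof.
  intros Hy. pose proof (INR_fact_lt_0 n).
  rewrite Rabs_mult, Rabs_div, <- RPow_abs, (Rabs_pos_eq (INR _)) by lra.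
  apply Rmult_le_compat_l; [apply Rdiv_le_0_compat; [apply pow_le, Rabs_pos | lra] | exact Hy].
Qed.

Lemma taylor_remainder_le (f : nat -> R -> R) (n : nat) (q x M : R) :
  (forall k s, (k <= n)%nat -> Rmin q x <= s <= Rmax q x -> is_derive (f k) s (f (S k) s)) ->
  (forall s, Rmin q x <= s <= Rmax q x -> Rabs (f (S n) s) <= M) ->
  Rabs (f 0%nat x - taylor_poly f n q x) <= M * Rabs (x - q) ^ S n / INR (fact (S n)).
Proof.
  intros Hd Hb.
  rewrite <- (taylor_poly_center f n x) at 1.
  destruct (Rle_dec q x) as [Hqx | Hxq].
  - rewrite Rmin_left, Rmax_right in Hd, Hb by lra.
    eapply Rle_trans.
    + apply (abs_sub_le_of_derive_dominated (fun c => taylor_poly f n c x)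
               (fun c => (x - c) ^ n / INR (fact n) * f (S n) c)
               (fun c => - M * ((x - c) ^ S n / INR (fact (S n))))
               (fun c => Rabs (x - c) ^ n / INR (fact n) * M) q x Hqx).
      * intros s Hs. apply is_derive_taylor_poly_center. intros k Hk. apply Hd; auto.
      * intros s Hs. rewrite Rabs_pos_eq by lra.
        assert (E : (x - s) ^ n / INR (fact n) * M = - M * (- ((x - s) ^ n / INR (fact n))))
          by ring.
        rewrite E. apply is_derive_scal, is_derive_pow_div_fact_rev.
      * intros s Hs. apply Rabs_pow_div_fact_mul_le, Hb, Hs.
    + rewrite Rminus_diag, pow_i, Rabs_pos_eq by (lia || lra). right. unfold Rdiv. ring.
  - rewrite Rmin_right, Rmax_left in Hd, Hb by lra.
    rewrite Rabs_minus_sym. eapply Rle_trans.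
    + apply (abs_sub_le_of_derive_dominated (fun c => taylor_poly f n c x)
               (fun c => (x - c) ^ n / INR (fact n) * f (S n) c)
               (fun c => M * ((c - x) ^ S n / INR (fact (S n))))
               (fun c => Rabs (x - c) ^ n / INR (fact n) * M) x q ltac:(lra)).
      * intros s Hs. apply is_derive_taylor_poly_center. intros k Hk. apply Hd; auto.
      * intros s Hs. rewrite Rabs_minus_sym, Rabs_pos_eq by lra.
        rewrite Rmult_comm. apply is_derive_scal, is_derive_pow_div_fact.
      * intros s Hs. apply Rabs_pow_div_fact_mul_le, Hb, Hs.
    + rewrite Rminus_diag, pow_i, Rabs_minus_sym, Rabs_pos_eq by (lia || lra).
      right. unfold Rdiv. ring.
Qed.

Lemma at_right_0_witness (P : R -> Prop) (b : R) :
  0 < b -> at_right 0 P -> exists s, 0 < s < b /\ P s.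
Proof.
  intros Hb [eps Heps].
  pose proof (cond_pos eps) as He.
  exists (Rmin eps b / 2).
  assert (0 < Rmin eps b) by (apply Rmin_pos; lra).
  assert (Rmin eps b <= eps) by apply Rmin_l.
  assert (Rmin eps b <= b) by apply Rmin_r.
  split; [lra |]. apply Heps; [| lra].
  change (Rabs (Rmin eps b / 2 - 0) < eps). rewrite Rabs_pos_eq; lra.
Qed.

Lemma filterlim_at_right_0_of_Rpower_bound (g : R -> R) (b C a : R) :
  0 < a -> 0 < b ->
  (forall s, 0 < s <= b -> Rabs (g s) <= C * Rpower s a) ->
  filterlim g (at_right 0) (locally 0).
Proof.
  intros Ha Hb Hg. apply filterlim_locally. intros eps.
  pose proof (cond_pos eps) as He.
  set (d := eps / (Rabs C + 1)).
  assert (Hd : 0 < d) by (apply Rdiv_lt_0_compat; [lra | pose proof (Rabs_pos C); lra]).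
  assert (Hdelta : 0 < Rmin b (Rpower d (/ a))) by (apply Rmin_pos; [lra | apply Rpower_pos]).
  exists (mkposreal _ Hdelta). intros s Hs Hpos.
  change (Rabs (s - 0) < Rmin b (Rpower d (/ a))) in Hs.
  rewrite Rminus_0_r, Rabs_pos_eq in Hs by lra.
  change (Rabs (g s - 0) < eps). rewrite Rminus_0_r.
  assert (Hsa : Rpower s a < d).
  { rewrite <- (Rpower_1 d Hd), <- (Rinv_l a) by lra. rewrite <- Rpower_mult.
    apply Rlt_Rpower_l; [exact Ha |]. split; [exact Hpos |].
    eapply Rlt_le_trans; [exact Hs | apply Rmin_r]. }
  assert (Hs' : 0 < s <= b)
    by (split; [exact Hpos |]; eapply Rlt_le, Rlt_le_trans; [exact Hs | apply Rmin_l]).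
  eapply Rle_lt_trans; [apply Hg, Hs' |].
  eapply Rle_lt_trans; [apply Rmult_le_compat_r; [left; apply Rpower_pos | apply RRle_abs] |].
  apply Rle_lt_trans with (Rabs C * d).
  - apply Rmult_le_compat_l; [apply Rabs_pos | lra].
  - unfold d. apply Rmult_lt_reg_r with (Rabs C + 1); [pose proof (Rabs_pos C); lra |].
    field_simplify; [| pose proof (Rabs_pos C); lra]. pose proof (Rabs_pos C). nra.
Qed.

Lemma abs_le_Rpower_of_derive (g dg : R -> R) (b L a : R) :
  0 < a -> 0 < b ->
  (forall s, 0 < s <= b -> is_derive g s (dg s)) ->
  (forall s, 0 < s <= b -> Rabs (dg s) <= L * Rpower s (a - 1)) ->
  filterlim g (at_right 0) (locally 0) ->
  Rabs (g b) <= L / a * Rpower b a.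
Proof.
  intros Ha Hb Hd Hbound Hlim.
  assert (HL : 0 <= L).
  { pose proof (Rle_trans _ _ _ (Rabs_pos _) (Hbound b ltac:(lra))) as H.
    pose proof (Rpower_pos b (a - 1)). nra. }
  apply Rle_plus_epsilon. intros eps Heps.
  destruct (at_right_0_witness (fun s => Rabs (g s) < eps) b Hb) as [s [Hs Hgs]].
  { apply (filterlim_locally g 0) with (eps := mkposreal eps Heps) in Hlim.
    eapply filter_imp; [| exact Hlim]. intros s Hs. change (Rabs (g s - 0) < eps) in Hs.
    rewrite Rminus_0_r in Hs. exact Hs. }
  assert (Hdom : Rabs (g b - g s) <= L / a * Rpower b a - L / a * Rpower s a).
  { apply (abs_sub_le_of_derive_dominated g dg (fun s => L / a * Rpower s a)
             (fun s => L * Rpower s (a - 1))); [lra | | |].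
    - intros y Hy. apply Hd. lra.
    - intros y Hy.
      assert (E : L * Rpower y (a - 1) = L / a * (a * Rpower y (a - 1))) by (field; lra).
      rewrite E. apply is_derive_scal, is_derive_Rpower. lra.
    - intros y Hy. apply Hbound. lra. }
  assert (0 <= L / a * Rpower s a)
    by (apply Rmult_le_pos; [apply Rdiv_le_0_compat; lra | left; apply Rpower_pos]).
  pose proof (Rabs_triang_inv (g b) (g s)). lra.
Qed.

Lemma taylor_poly_to_0_error_le (f : nat -> R -> R) (n : nat) (b L a : R) :
  0 < a -> 0 < b ->
  (forall k s, (k <= n)%nat -> 0 < s <= b -> is_derive (f k) s (f (S k) s)) ->
  (forall s, 0 < s <= b -> Rabs (f (S n) s) <= L * Rpower s (a - INR (S n))) ->
  filterlim (fun s => taylor_poly f n s 0) (at_right 0) (locally (f 0%nat 0)) ->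
  Rabs (taylor_poly f n b 0 - f 0%nat 0) <= L / (INR (fact n) * a) * Rpower b a.
Proof.
  intros Ha Hb Hd Hbound Hlim.
  pose proof (INR_fact_lt_0 n) as Hfn.
  replace (L / (INR (fact n) * a)) with (L / INR (fact n) / a) by (field; lra).
  apply (abs_le_Rpower_of_derive (fun s => taylor_poly f n s 0 - f 0%nat 0)
           (fun s => (0 - s) ^ n / INR (fact n) * f (S n) s)); [exact Ha | exact Hb | | |].
  - intros s Hs.
    assert (E : (0 - s) ^ n / INR (fact n) * f (S n) s
                = (0 - s) ^ n / INR (fact n) * f (S n) s - 0) by ring.
    rewrite E. apply is_derive_Rminus.
    + apply is_derive_taylor_poly_center. intros k Hk. apply Hd; assumption.
    + exact (is_derive_const (K := R_AbsRing) (V := R_NormedModule) _ s).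
  - intros s Hs. eapply Rle_trans; [apply Rabs_pow_div_fact_mul_le, Hbound, Hs |].
    rewrite Rabs_minus_sym, Rminus_0_r, Rabs_pos_eq by lra.
    replace (a - 1) with (a - INR (S n) + INR n) by (rewrite S_INR; ring).
    rewrite <- Rpower_pow_mul by lra. right. unfold Rdiv. ring.
  - pose proof (filterlim_Rplus _ (fun _ => - f 0%nat 0) _ _ Hlim (filterlim_const _)) as H.
    rewrite Rplus_opp_r in H. exact H.
Qed.

(** * The variable-step BDF2 quotient *)

(* On nodes [p < q < r], with [rho = (r - q) / (q - p)], the kernels of the statement are
   [b_0 = bdf2_coef0 p q r] and [b_1 = - bdf2_coef1 p q r]. *)
Definition bdf2_coef0 (p q r : R) : R :=
  let rho := (r - q) / (q - p) in (1 + 2 * rho) / ((r - q) * (1 + rho)).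

Definition bdf2_coef1 (p q r : R) : R :=
  let rho := (r - q) / (q - p) in rho ^ 2 / ((r - q) * (1 + rho)).

Definition bdf2_diff (p q r : R) (v : R -> R) : R :=
  bdf2_coef0 p q r * (v r - v q) - bdf2_coef1 p q r * (v q - v p).

Lemma bdf2_coef0_bounds (p q r : R) :
  p < q < r -> 0 <= bdf2_coef0 p q r /\ bdf2_coef0 p q r * (r - q) <= 2.
Proof.
  intros Hpqr. unfold bdf2_coef0.
  set (rho := (r - q) / (q - p)).
  assert (Hrho : 0 < rho) by (apply Rdiv_lt_0_compat; lra).
  split.
  - apply Rlt_le, Rdiv_lt_0_compat; nra.
  - replace ((1 + 2 * rho) / ((r - q) * (1 + rho)) * (r - q)) with (2 - 1 / (1 + rho))
      by (field; lra).
    assert (0 < 1 / (1 + rho)) by (apply Rdiv_lt_0_compat; lra). lra.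
Qed.

Lemma bdf2_coef1_bounds (p q r : R) :
  p < q < r -> 0 <= bdf2_coef1 p q r /\ bdf2_coef1 p q r * (q - p) <= 1.
Proof.
  intros Hpqr. unfold bdf2_coef1.
  set (rho := (r - q) / (q - p)).
  assert (Hrho : 0 < rho) by (apply Rdiv_lt_0_compat; lra).
  split.
  - apply Rlt_le, Rdiv_lt_0_compat; nra.
  - replace (rho ^ 2 / ((r - q) * (1 + rho)) * (q - p)) with (1 - 1 / (1 + rho))
      by (unfold rho; field; lra).
    assert (0 < 1 / (1 + rho)) by (apply Rdiv_lt_0_compat; lra). lra.
Qed.

Lemma bdf2_diff_taylor_split (f : nat -> R -> R) (p q r : R) :
  p < q < r ->
  bdf2_diff p q r (f 0%nat) - f 1%nat r =
    bdf2_coef0 p q r * (f 0%nat r - taylor_poly f 2 q r)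
    - (f 1%nat r - taylor_poly (fun k => f (S k)) 1 q r)
    + bdf2_coef1 p q r * (f 0%nat p - taylor_poly f 2 q p).
Proof.
  intros Hpqr. unfold bdf2_diff, bdf2_coef0, bdf2_coef1.
  rewrite !taylor_poly_2, taylor_poly_1.
  assert (0 < (r - q) / (q - p)) by (apply Rdiv_lt_0_compat; lra).
  field. lra.
Qed.

Lemma bdf2_forward_remainder_le (f : nat -> R -> R) (q r c M : R) :
  q < r -> 0 <= c -> c * (r - q) <= 2 ->
  (forall k s, (k <= 2)%nat -> q <= s <= r -> is_derive (f k) s (f (S k) s)) ->
  (forall s, q <= s <= r -> Rabs (f 3%nat s) <= M) ->
  Rabs (c * (f 0%nat r - taylor_poly f 2 q r)
        - (f 1%nat r - taylor_poly (fun k => f (S k)) 1 q r))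
    <= 5 / 6 * M * (r - q) ^ 2.
Proof.
  intros Hqr Hc Hcr Hd Hb.
  pose proof (taylor_remainder_le f 2 q r M) as H2.
  pose proof (taylor_remainder_le (fun k => f (S k)) 1 q r M) as H1.
  rewrite Rmin_left, Rmax_right, (Rabs_pos_eq (r - q)) in H1, H2 by lra.
  specialize (H2 Hd Hb). specialize (H1 ltac:(intros k s Hk; apply Hd; lia) Hb).
  replace (INR (fact 3)) with 6 in H2 by (simpl; lra).
  replace (INR (fact 2)) with 2 in H1 by (simpl; lra).
  set (R2 := f 0%nat r - taylor_poly f 2 q r) in *.
  set (R1 := f 1%nat r - taylor_poly (fun k => f (S k)) 1 q r) in *.
  assert (HM : 0 <= M) by (eapply Rle_trans; [apply Rabs_pos | apply (Hb q); lra]).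
  set (X := M * (r - q) ^ 2).
  assert (HX : 0 <= X) by (apply Rmult_le_pos; [exact HM | apply pow2_ge_0]).
  assert (HR2 : c * Rabs R2 <= X / 3).
  { apply Rle_trans with (c * (r - q) * X / 6); [| nra].
    replace (c * (r - q) * X / 6) with (c * (M * (r - q) ^ 3 / 6)) by (unfold X, Rdiv; ring).
    apply Rmult_le_compat_l; assumption. }
  replace (M * (r - q) ^ 2 / 2) with (X / 2) in H1 by (unfold X, Rdiv; ring).
  replace (5 / 6 * M * (r - q) ^ 2) with (5 / 6 * X) by (unfold X; ring).
  pose proof (Rabs_triang (c * R2) (- R1)) as Htri.
  rewrite Rabs_Ropp, Rabs_mult, (Rabs_pos_eq c Hc) in Htri.
  unfold Rminus. lra.
Qed.

Section ScalarTruncationError.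

Variables (f : nat -> R -> R) (b K a : R).
Hypothesis a_pos : 0 < a.
Hypothesis a_le_3 : a <= 3.
Hypothesis K_nonneg : 0 <= K.
Hypothesis f_derive :
  forall k s, (k < 3)%nat -> 0 < s <= b -> is_derive (f k) s (f (S k) s).
Hypothesis f_bound :
  forall k s, (1 <= k <= 3)%nat -> 0 < s <= b -> Rabs (f k s) <= K * Rpower s (a - INR k).
Hypothesis f_cont : filterlim (f 0%nat) (at_right 0) (locally (f 0%nat 0)).

Lemma filterlim_taylor_poly_to_0 (n : nat) :
  (n <= 3)%nat -> 0 < b ->
  filterlim (fun s => taylor_poly f n s 0) (at_right 0) (locally (f 0%nat 0)).
Proof.
  intros Hn Hb. induction n as [|n IH].
  - eapply filterlim_ext; [intros s; symmetry; apply taylor_poly_O | exact f_cont].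
  - eapply filterlim_ext; [intros s; symmetry; apply taylor_poly_S |].
    assert (Hterm : filterlim (fun s => (0 - s) ^ S n / INR (fact (S n)) * f (S n) s)
                      (at_right 0) (locally 0)).
    { apply (filterlim_at_right_0_of_Rpower_bound _ b (K / INR (fact (S n))) a a_pos Hb).
      intros s Hs.
      eapply Rle_trans; [apply Rabs_pow_div_fact_mul_le, f_bound; [lia | exact Hs] |].
      rewrite Rabs_minus_sym, Rminus_0_r, Rabs_pos_eq by lra.
      replace a with (a - INR (S n) + INR (S n)) at 2 by ring.
      rewrite <- Rpower_pow_mul by lra. right. unfold Rdiv. ring. }
    pose proof (filterlim_Rplus (F := at_right 0) _ _ _ _ (IH ltac:(lia)) Hterm) as H.
    rewrite Rplus_0_r in H. exact H.
Qed.

Lemma f_derive_upto (n : nat) (c : R) :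
  (n <= 2)%nat -> c <= b ->
  forall k s, (k <= n)%nat -> 0 < s <= c -> is_derive (f k) s (f (S k) s).
Proof. intros Hn Hc k s Hk Hs. apply f_derive; [lia | lra]. Qed.

Lemma f3_bound_from (q s : R) :
  0 < q <= s -> s <= b -> Rabs (f 3%nat s) <= K * Rpower q (a - 3).
Proof.
  intros Hq Hs. eapply Rle_trans; [apply f_bound; [lia | lra] |].
  replace (INR 3) with 3 by (simpl; ring).
  apply Rmult_le_compat_l; [exact K_nonneg |]. apply Rpower_antitone_nonpos; lra.
Qed.

Lemma bdf1_error_le (q : R) :
  0 < q <= b -> Rabs (1 / q * (f 0%nat q - f 0%nat 0) - f 1%nat q) <= K / a * Rpower q (a - 1).
Proof.
  intros Hq.
  pose proof (taylor_poly_to_0_error_le f 1 q K a a_pos ltac:(lra)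
                (f_derive_upto 1 q ltac:(lia) ltac:(lra))
                ltac:(intros s Hs; apply f_bound; [lia | lra])
                (filterlim_taylor_poly_to_0 1 ltac:(lia) ltac:(lra))) as H.
  rewrite taylor_poly_1 in H. replace (INR (fact 1)) with 1 in H by (simpl; ring).
  replace (1 / q * (f 0%nat q - f 0%nat 0) - f 1%nat q)
    with ((f 0%nat q + (0 - q) * f 1%nat q - f 0%nat 0) / q) by (field; lra).
  rewrite Rabs_div, (Rabs_pos_eq q) by lra.
  apply Rmult_le_reg_r with q; [lra |].
  unfold Rdiv at 1. rewrite Rmult_assoc, Rinv_l, Rmult_1_r by lra.
  rewrite (Rpower_sub_1 q a) in H by lra.
  replace (K / (1 * a) * (q * Rpower q (a - 1))) with (K / a * Rpower q (a - 1) * q) in H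
    by (field; lra).
  exact H.
Qed.

Lemma bdf2_error_le (p q r : R) :
  0 < p -> p < q < r -> r <= b ->
  Rabs (bdf2_diff p q r (f 0%nat) - f 1%nat r)
    <= K * (2 * (r - q) ^ 2 * Rpower q (a - 3) + 1 / 2 * (q - p) ^ 2 * Rpower p (a - 3)).
Proof.
  intros Hp Hpqr Hr.
  rewrite bdf2_diff_taylor_split by exact Hpqr.
  destruct (bdf2_coef0_bounds p q r Hpqr) as [H0 H0r].
  destruct (bdf2_coef1_bounds p q r Hpqr) as [H1 H1p].
  pose proof (bdf2_forward_remainder_le f q r _ (K * Rpower q (a - 3)) ltac:(lra) H0 H0r
                ltac:(intros k s Hk Hs; apply f_derive; [lia | lra])
                ltac:(intros s Hs; apply f3_bound_from; lra)) as Hfwd.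
  pose proof (taylor_remainder_le f 2 q p (K * Rpower p (a - 3))) as Hbwd.
  rewrite Rmin_right, Rmax_left, (Rabs_left (p - q)) in Hbwd by lra.
  specialize (Hbwd ltac:(intros k s Hk Hs; apply f_derive; [lia | lra])
                   ltac:(intros s Hs; apply f3_bound_from; lra)).
  replace (INR (fact 3)) with 6 in Hbwd by (simpl; ring).
  set (X := K * Rpower q (a - 3) * (r - q) ^ 2).
  replace (5 / 6 * (K * Rpower q (a - 3)) * (r - q) ^ 2) with (5 / 6 * X) in Hfwd
    by (unfold X; ring).
  set (Y := K * Rpower p (a - 3) * (q - p) ^ 2).
  assert (HX : 0 <= X) by (pose proof (Rpower_pos q (a - 3)); pose proof (pow2_ge_0 (r - q));
                           unfold X; apply Rmult_le_pos; nra).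
  assert (HY : 0 <= Y) by (pose proof (Rpower_pos p (a - 3)); pose proof (pow2_ge_0 (q - p));
                           unfold Y; apply Rmult_le_pos; nra).
  set (R2p := f 0%nat p - taylor_poly f 2 q p) in *.
  assert (Hc1 : Rabs (bdf2_coef1 p q r * R2p) <= Y / 6).
  { rewrite Rabs_mult, (Rabs_pos_eq _ H1).
    apply Rle_trans with (bdf2_coef1 p q r * (q - p) * Y / 6).
    2: { assert (bdf2_coef1 p q r * (q - p) * Y <= 1 * Y) by (apply Rmult_le_compat_r; lra).
         lra. }
    replace (bdf2_coef1 p q r * (q - p) * Y / 6)
      with (bdf2_coef1 p q r * (K * Rpower p (a - 3) * (- (p - q)) ^ 3 / 6))
      by (unfold Y, Rdiv; ring).
    apply Rmult_le_compat_l; assumption. }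
  replace (K * (2 * (r - q) ^ 2 * Rpower q (a - 3) + 1 / 2 * (q - p) ^ 2 * Rpower p (a - 3)))
    with (2 * X + Y / 2) by (unfold X, Y; field).
  eapply Rle_trans; [apply Rabs_triang | lra].
Qed.

Lemma bdf2_error_start_le (q r : R) :
  0 < q < r -> r <= b ->
  Rabs (bdf2_diff 0 q r (f 0%nat) - f 1%nat r)
    <= (2 * ((r - q) / q) ^ 2 + 1 / (2 * a)) * K * Rpower q (a - 1).
Proof.
  intros Hqr Hr.
  rewrite bdf2_diff_taylor_split by lra.
  destruct (bdf2_coef0_bounds 0 q r ltac:(lra)) as [H0 H0r].
  destruct (bdf2_coef1_bounds 0 q r ltac:(lra)) as [H1 H1q].
  rewrite Rminus_0_r in H1q.
  pose proof (bdf2_forward_remainder_le f q r _ (K * Rpower q (a - 3)) ltac:(lra) H0 H0r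
                ltac:(intros k s Hk Hs; apply f_derive; [lia | lra])
                ltac:(intros s Hs; apply f3_bound_from; lra)) as Hfwd.
  pose proof (taylor_poly_to_0_error_le f 2 q K a a_pos ltac:(lra)
                (f_derive_upto 2 q ltac:(lia) ltac:(lra))
                ltac:(intros s Hs; apply f_bound; [lia | lra])
                (filterlim_taylor_poly_to_0 2 ltac:(lia) ltac:(lra))) as Hstart.
  replace (INR (fact 2)) with 2 in Hstart by (simpl; ring).
  set (P := Rpower q (a - 1)).
  assert (HP : 0 < P) by apply Rpower_pos.
  assert (Eq3 : Rpower q (a - 3) * (r - q) ^ 2 = ((r - q) / q) ^ 2 * P).
  { unfold P. replace (a - 1) with (a - 3 + INR 2) by (simpl; ring).
    rewrite <- Rpower_pow_mul by lra. field. lra. }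
  rewrite (Rpower_sub_1 q a) in Hstart by lra. fold P in Hstart.
  set (R2 := f 0%nat 0 - taylor_poly f 2 q 0).
  assert (Hc1 : Rabs (bdf2_coef1 0 q r * R2) <= 1 / (2 * a) * K * P).
  { unfold R2. rewrite Rabs_mult, (Rabs_pos_eq _ H1), Rabs_minus_sym.
    apply Rle_trans with (bdf2_coef1 0 q r * q * (K / (2 * a) * P)).
    - replace (bdf2_coef1 0 q r * q * (K / (2 * a) * P))
        with (bdf2_coef1 0 q r * (K / (2 * a) * (q * P))) by ring.
      apply Rmult_le_compat_l; assumption.
    - assert (0 <= K / (2 * a) * P) by (apply Rmult_le_pos; [apply Rdiv_le_0_compat | ]; lra).
      replace (1 / (2 * a) * K * P) with (K / (2 * a) * P) by (field; lra). nra. }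
  replace (5 / 6 * (K * Rpower q (a - 3)) * (r - q) ^ 2)
    with (5 / 6 * K * (((r - q) / q) ^ 2 * P)) in Hfwd by (rewrite <- Eq3; ring).
  assert (0 <= K * (((r - q) / q) ^ 2 * P))
    by (apply Rmult_le_pos; [exact K_nonneg | apply Rmult_le_pos; [apply pow2_ge_0 | lra]]).
  eapply Rle_trans; [apply Rabs_triang |].
  replace ((2 * ((r - q) / q) ^ 2 + 1 / (2 * a)) * K * P)
    with (2 * (K * (((r - q) / q) ^ 2 * P)) + 1 / (2 * a) * K * P) by ring.
  lra.
Qed.

End ScalarTruncationError.

Section GridInnerProduct.

Variables (M : nat) (h : R).

Definition dinner (v w : nat -> R) : R := sum_n_m (fun i => h * v i * w i) 1 (M - 1).

Lemma dnorm_ext (v w : nat -> R) : (forall i, v i = w i) -> dnorm M h v = dnorm M h w.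
Proof.
  intros Hvw. unfold dnorm. apply f_equal, sum_n_m_ext_R. intros i. rewrite Hvw. reflexivity.
Qed.

Lemma dnorm_sqrt_dinner (v : nat -> R) : dnorm M h v = sqrt (dinner v v).
Proof. unfold dnorm, dinner. apply f_equal. apply sum_n_m_ext_R. intros i. ring. Qed.

Lemma dinner_scal_r (v w : nat -> R) (c : R) :
  dinner v (fun i => c * w i) = c * dinner v w.
Proof.
  unfold dinner. rewrite <- sum_n_m_Rmult_l. apply sum_n_m_ext_R. intros i. ring.
Qed.

Lemma dinner_minus_r (v w1 w2 : nat -> R) :
  dinner v (fun i => w1 i - w2 i) = dinner v w1 - dinner v w2.
Proof.
  unfold dinner.
  rewrite (sum_n_m_ext_R _ (fun i => h * v i * w1 i + -1 * (h * v i * w2 i))) by (intros i; ring).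
  rewrite sum_n_m_Rplus, sum_n_m_Rmult_l. ring.
Qed.

Lemma dinner_bdf2_diff (v : nat -> R) (F : nat -> R -> R) (G : nat -> R) (p q r : R) :
  dinner v (fun i => bdf2_diff p q r (F i) - G i)
  = bdf2_diff p q r (fun s => dinner v (fun i => F i s)) - dinner v G.
Proof.
  unfold bdf2_diff. rewrite !dinner_minus_r, !dinner_scal_r, !dinner_minus_r. reflexivity.
Qed.

Hypothesis h_nonneg : 0 <= h.

Lemma dinner_self_nonneg (v : nat -> R) : 0 <= dinner v v.
Proof.
  apply sum_n_m_nonneg. intros i. rewrite Rmult_assoc. apply Rmult_le_pos; [exact h_nonneg |].
  apply Rle_0_sqr.
Qed.

Lemma dinner_cauchy_schwarz (v w : nat -> R) :
  Rabs (dinner v w) <= dnorm M h v * dnorm M h w.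
Proof.
  set (A := dinner v v). set (B := dinner w w). set (S := dinner v w).
  assert (HA : 0 <= A) by apply dinner_self_nonneg.
  assert (HB : 0 <= B) by apply dinner_self_nonneg.
  assert (Hquad : forall l, 0 <= l ^ 2 * A - 2 * l * S + B).
  { intros l.
    replace (l ^ 2 * A - 2 * l * S + B)
      with (dinner (fun i => l * v i - w i) (fun i => l * v i - w i)).
    - apply dinner_self_nonneg.
    - unfold A, B, S, dinner.
      rewrite (sum_n_m_ext_R _ (fun i => l ^ 2 * (h * v i * v i)
                                         + (-2 * l * (h * v i * w i) + h * w i * w i)))
        by (intros i; ring).
      rewrite !sum_n_m_Rplus, !sum_n_m_Rmult_l. ring. }
  assert (HS : S ^ 2 <= A * B).
  { destruct (Req_dec A 0) as [HA0 | HA0].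
    - destruct (Req_dec S 0) as [HS0 | HS0]; [rewrite HS0, HA0; lra |].
      specialize (Hquad ((B + 1) / (2 * S))). rewrite HA0 in Hquad.
      replace (((B + 1) / (2 * S)) ^ 2 * 0 - 2 * ((B + 1) / (2 * S)) * S + B) with (-1) in Hquad
        by (field; exact HS0).
      lra.
    - specialize (Hquad (S / A)).
      replace ((S / A) ^ 2 * A - 2 * (S / A) * S + B) with (B - S ^ 2 / A) in Hquad
        by (field; exact HA0).
      apply Rmult_le_reg_r with (/ A); [apply Rinv_0_lt_compat; lra |].
      replace (A * B * / A) with B by (field; exact HA0). unfold Rdiv in Hquad. lra. }
  rewrite !dnorm_sqrt_dinner. fold A B. rewrite <- sqrt_mult by assumption.
  rewrite <- sqrt_Rsqr_abs. apply sqrt_le_1_alt. unfold Rsqr. lra.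
Qed.

Lemma dnorm_le_of_dinner_self_le (v : nat -> R) (B : R) :
  0 <= B -> dinner v v <= dnorm M h v * B -> dnorm M h v <= B.
Proof.
  intros HB Hle. rewrite dnorm_sqrt_dinner in *.
  pose proof (sqrt_pos (dinner v v)).
  pose proof (sqrt_sqrt (dinner v v) (dinner_self_nonneg v)). nra.
Qed.

End GridInnerProduct.

Section GridTruncationError.

Variables (M : nat) (h : R) (ud : nat -> nat -> R -> R) (Cb alpha b : R).
Hypothesis h_nonneg : 0 <= h.
Hypothesis alpha_pos : 0 < alpha.
Hypothesis alpha_le_3 : alpha <= 3.
Hypothesis Cb_nonneg : 0 <= Cb.
Hypothesis ud_derive : forall i k s, (1 <= i <= M - 1)%nat -> (k < 3)%nat -> 0 < s <= b ->
  is_derive (ud k i) s (ud (S k) i s).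
Hypothesis ud_cont : forall i, (1 <= i <= M - 1)%nat ->
  filterlim (ud O i) (at_right 0) (locally (ud O i 0)).
Hypothesis ud_bound : forall k s, (1 <= k <= 3)%nat -> 0 < s <= b ->
  dnorm M h (fun i => ud k i s) <= Cb * Rpower s (alpha - INR k).

Let ud_along (e : nat -> R) (k : nat) (s : R) : R := dinner M h e (fun i => ud k i s).

Lemma ud_along_derive (e : nat -> R) :
  forall k s, (k < 3)%nat -> 0 < s <= b -> is_derive (ud_along e k) s (ud_along e (S k) s).
Proof.
  intros k s Hk Hs. unfold ud_along, dinner.
  apply (is_derive_sum_n_m (fun i y => h * e i * ud k i y)). intros i Hi.
  apply is_derive_scal, ud_derive; [lia | exact Hk | exact Hs].
Qed.

Lemma ud_along_bound (e : nat -> R) :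
  forall k s, (1 <= k <= 3)%nat -> 0 < s <= b ->
  Rabs (ud_along e k s) <= dnorm M h e * Cb * Rpower s (alpha - INR k).
Proof.
  intros k s Hk Hs. eapply Rle_trans; [apply dinner_cauchy_schwarz, h_nonneg |].
  rewrite Rmult_assoc. apply Rmult_le_compat_l; [apply sqrt_pos | apply ud_bound; assumption].
Qed.

Lemma ud_along_cont (e : nat -> R) :
  filterlim (ud_along e 0) (at_right 0) (locally (ud_along e 0%nat 0)).
Proof.
  unfold ud_along, dinner.
  apply (filterlim_sum_n_m (fun i s => h * e i * ud 0%nat i s)). intros i Hi.
  apply filterlim_Rmult_l, ud_cont. lia.
Qed.

Lemma bdf1_truncation_error_le (q : R) :
  0 < q <= b ->
  dnorm M h (fun i => 1 / q * (ud 0%nat i q - ud 0%nat i 0) - ud 1%nat i q)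
    <= Cb / alpha * Rpower q (alpha - 1).
Proof.
  intros Hq. set (e := fun i => 1 / q * (ud 0%nat i q - ud 0%nat i 0) - ud 1%nat i q).
  apply dnorm_le_of_dinner_self_le; [exact h_nonneg | |].
  { apply Rmult_le_pos; [apply Rdiv_le_0_compat; lra | left; apply Rpower_pos]. }
  assert (E : dinner M h e e = 1 / q * (ud_along e 0 q - ud_along e 0 0) - ud_along e 1 q).
  { unfold e at 2. rewrite dinner_minus_r, dinner_scal_r, dinner_minus_r. reflexivity. }
  rewrite E. eapply Rle_trans; [apply Rle_abs |].
  eapply Rle_trans.
  - apply (bdf1_error_le (ud_along e) b (dnorm M h e * Cb) alpha alpha_pos
             (ud_along_derive e) (ud_along_bound e) (ud_along_cont e) q Hq).
  - right. field. lra.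
Qed.

Lemma bdf2_truncation_error_start_le (q r : R) :
  0 < q < r -> r <= b ->
  dnorm M h (fun i => bdf2_diff 0 q r (ud 0%nat i) - ud 1%nat i r)
    <= (2 * ((r - q) / q) ^ 2 + 1 / (2 * alpha)) * Cb * Rpower q (alpha - 1).
Proof.
  intros Hqr Hr. set (e := fun i => bdf2_diff 0 q r (ud 0%nat i) - ud 1%nat i r).
  apply dnorm_le_of_dinner_self_le; [exact h_nonneg | |].
  { apply Rmult_le_pos; [apply Rmult_le_pos; [| exact Cb_nonneg] | left; apply Rpower_pos].
    assert (0 < 1 / (2 * alpha)) by (apply Rdiv_lt_0_compat; lra).
    pose proof (pow2_ge_0 ((r - q) / q)). lra. }
  assert (E : dinner M h e e = bdf2_diff 0 q r (ud_along e 0) - ud_along e 1 r)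
    by (unfold e at 2; apply dinner_bdf2_diff).
  rewrite E. eapply Rle_trans; [apply Rle_abs |].
  eapply Rle_trans.
  - apply (bdf2_error_start_le (ud_along e) b (dnorm M h e * Cb) alpha alpha_pos alpha_le_3
             ltac:(apply Rmult_le_pos; [apply sqrt_pos | exact Cb_nonneg])
             (ud_along_derive e) (ud_along_bound e) (ud_along_cont e) q r Hqr Hr).
  - right. ring.
Qed.

Lemma bdf2_truncation_error_le (p q r : R) :
  0 < p -> p < q < r -> r <= b ->
  dnorm M h (fun i => bdf2_diff p q r (ud 0%nat i) - ud 1%nat i r)
    <= Cb * (2 * (r - q) ^ 2 * Rpower q (alpha - 3)
             + 1 / 2 * (q - p) ^ 2 * Rpower p (alpha - 3)).
Proof.
  intros Hp Hpqr Hr. set (e := fun i => bdf2_diff p q r (ud 0%nat i) - ud 1%nat i r).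
  apply dnorm_le_of_dinner_self_le; [exact h_nonneg | |].
  { apply Rmult_le_pos; [exact Cb_nonneg |].
    apply Rplus_le_le_0_compat; apply Rmult_le_pos;
      try (apply Rmult_le_pos; [lra | apply pow2_ge_0]); left; apply Rpower_pos. }
  assert (E : dinner M h e e = bdf2_diff p q r (ud_along e 0) - ud_along e 1 r)
    by (unfold e at 2; apply dinner_bdf2_diff).
  rewrite E. eapply Rle_trans; [apply Rle_abs |].
  eapply Rle_trans.
  - apply (bdf2_error_le (ud_along e) b (dnorm M h e * Cb) alpha alpha_le_3
             ltac:(apply Rmult_le_pos; [apply sqrt_pos | exact Cb_nonneg])
             (ud_along_derive e) (ud_along_bound e) p q r Hp Hpqr Hr).
  - right. ring.
Qed.

End GridTruncationError.

Lemma grid_lt (N : nat) (t : nat -> R) :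
  (forall k, (k < N)%nat -> t k < t (S k)) -> forall m k, (m < k <= N)%nat -> t m < t k.
Proof.
  intros Hmono m k. induction k as [|k IH]; intros Hmk; [lia |].
  destruct (Nat.eq_dec m k) as [-> | Hne]; [apply Hmono; lia |].
  apply Rlt_trans with (t k); [apply IH; lia | apply Hmono; lia].
Qed.

Lemma D2_bdf2_diff (t : nat -> R) (g : R -> R) (j : nat) :
  (2 <= j)%nat -> D2 t (fun k => g (t k)) j = bdf2_diff (t (j - 2)%nat) (t (j - 1)%nat) (t j) g.
Proof.
  intros Hj. destruct j as [|[|j]]; [lia | lia |].
  unfold D2. rewrite !sum_n_Sm by lia.
  rewrite (sum_n_m_ext_loc _ (fun _ => 0)).
  2: { intros k Hk. replace (S (S j) - k)%nat with (S (S (j - k))) by lia. simpl. ring. }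
  rewrite sum_n_m_const, Rmult_0_r.
  replace (S (S j) - S j)%nat with 1%nat by lia.
  replace (S (S j) - S (S j))%nat with 0%nat by lia.
  unfold bdf2_diff, bdf2_coef0, bdf2_coef1, bdf2_kernel, ratio, tau.
  replace (S (S j) - 1)%nat with (S j) by lia.
  replace (S (S j) - 2)%nat with j by lia.
  replace (S j - 1)%nat with j by lia.
  change plus with Rplus. unfold Rdiv. ring.
Qed.

Lemma eta_1 (t : nat -> R) (ud : nat -> nat -> R -> R) (i : nat) :
  eta t ud 1 i = 1 / tau t 1 * (ud 0%nat i (t 1%nat) - ud 0%nat i (t 0%nat)) - ud 1%nat i (t 1%nat).
Proof. unfold eta, D2. rewrite sum_n_n. reflexivity. Qed.

Lemma eta_bdf2_diff (t : nat -> R) (ud : nat -> nat -> R -> R) (j : nat) :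
  (2 <= j)%nat ->
  forall i, eta t ud j i = bdf2_diff (t (j - 2)%nat) (t (j - 1)%nat) (t j) (ud 0%nat i)
                           - ud 1%nat i (t j).
Proof. intros Hj i. unfold eta. rewrite D2_bdf2_diff by exact Hj. reflexivity. Qed.

Theorem mainTheorem10
  (N M : nat) (h : R) (t : nat -> R) (ud : nat -> nat -> R -> R) (Cb alpha : R)
  (HN : (1 <= N)%nat) (HM : (2 <= M)%nat) (Hh : 0 < h)
  (Ht0 : t O = 0) (Hmono : forall k, (k < N)%nat -> t k < t (S k))
  (HC : 0 < Cb) (Ha : 1 / 2 <= alpha <= 1)
  (Hder : forall i k s, (1 <= i <= M - 1)%nat -> (k < 3)%nat -> 0 < s <= t N ->
            is_derive (ud k i) s (ud (S k) i s))
  (Hcont : forall i, (1 <= i <= M - 1)%nat ->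
            filterlim (ud O i) (at_right 0) (locally (ud O i 0)))
  (Hbnd : forall k s, (1 <= k <= 3)%nat -> 0 < s <= t N ->
            dnorm M h (fun i => ud k i s) <= Cb * Rpower s (alpha - INR k)) :
  (forall j, (3 <= j <= N)%nat ->
     dnorm M h (eta t ud j)
       <= 2 * Cb * tau t j ^ 2 * Rpower (t (j - 1)%nat) (alpha - 3)
          + 1 / 2 * Cb * tau t (j - 1)%nat ^ 2 * Rpower (t (j - 2)%nat) (alpha - 3))
  /\ ((2 <= N)%nat ->
     dnorm M h (eta t ud 2)
       <= (2 * ratio t 2 ^ 2 + 1 / (2 * alpha)) * Cb * Rpower (tau t 1) (alpha - 1))
  /\ dnorm M h (eta t ud 1) <= Cb / alpha * Rpower (tau t 1) (alpha - 1).
Proof.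
  pose proof (grid_lt N t Hmono) as t_lt.
  assert (t_pos : forall k, (1 <= k <= N)%nat -> 0 < t k)
    by (intros k Hk; rewrite <- Ht0; apply t_lt; lia).
  assert (t_le : forall k, (k <= N)%nat -> t k <= t N)
    by (intros k Hk; destruct (Nat.eq_dec k N) as [-> | Hne]; [lra | left; apply t_lt; lia]).
  assert (tau_1 : tau t 1 = t 1%nat) by (unfold tau; simpl; rewrite Ht0; ring).
  assert (Hh0 : 0 <= h) by lra. assert (HC0 : 0 <= Cb) by lra.
  assert (Ha0 : 0 < alpha) by lra. assert (Ha3 : alpha <= 3) by lra.
  split; [| split].
  - intros j Hj. rewrite (dnorm_ext M h _ _ (eta_bdf2_diff t ud j ltac:(lia))).
    eapply Rle_trans.
    + apply (bdf2_truncation_error_le M h ud Cb alpha (t N) Hh0 Ha3 HC0 Hder Hbnd);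
        [apply t_pos | split; apply t_lt | apply t_le]; lia.
    + unfold tau. replace (j - 1 - 1)%nat with (j - 2)%nat by lia. right. ring.
  - intros HN2. rewrite (dnorm_ext M h _ _ (eta_bdf2_diff t ud 2 ltac:(lia))).
    change (t (2 - 2)%nat) with (t 0%nat). rewrite Ht0.
    unfold ratio. change (tau t (2 - 1)) with (tau t 1). rewrite tau_1.
    apply (bdf2_truncation_error_start_le M h ud Cb alpha (t N) Hh0 Ha0 Ha3 HC0 Hder Hcont Hbnd);
      [split; [apply t_pos | apply t_lt] | apply t_le]; lia.
  - rewrite (dnorm_ext M h _ _ (eta_1 t ud)), tau_1, Ht0.
    apply (bdf1_truncation_error_le M h ud Cb alpha (t N) Hh0 Ha0 HC0 Hder Hcont Hbnd).
    split; [apply t_pos | apply t_le]; lia.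
Qed.
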